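(* Let $n\in\mathbb{N}$ and let $m_1,\dots,m_n>0$ be arbitrary masses. Consider $n$ point particles on the real line with positions $q_1(t)<q_2(t)<\dots<q_n(t)$ (ties only at collision instants), moving freely with constant velocities between collisions and undergoing elastic binary collisions (as described in the context), with the motion considered for all times $t\in\mathbb{R}$. If the total number of collisions (over all $t\in\mathbb{R}$) is strictly smaller than $n-1$, then all particles have the same velocity, so that in fact no collision occurs at all.
   Context: Dynamics: $n$ point particles of masses $m_1,\dots,m_n>0$ move on $\mathbb{R}$; their order is preserved, i.e. $q_k(t)\le q_{k+1}(t)$ for all $t$. Between collisions each particle moves with constant velocity. A collision is an instant where $q_i=q_{i+1}$; in a binary collision of particles $i$ and $i+1$ with incoming velocities $v_i,v_{i+1}$, the outgoing velocities are $v_i'=\frac{(m_i-m_{i+1})v_i+2m_{i+1}v_{i+1}}{m_i+m_{i+1}}$, $v_{i+1}'=\frac{(m_{i+1}-m_i)v_{i+1}+2m_i v_i}{m_i+m_{i+1}}$ (conservation of momentum and kinetic energy); all other velocities are unchanged. *)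

From Stdlib Require Import Reals Lra Lia.
Open Scope R_scope.

(* Particles are indexed by i : nat with (i < n)%nat (i.e. 0-based: particle
   i here is particle i+1 of the paper).  A motion with k collisions is
   described by:
   - tc j   : the instant of the j-th collision (j < k), listed in time order;
   - ic j   : the collision j involves particles ic j and ic j + 1;
   - v j i  : the velocity of particle i on the j-th free-flight interval
              (j <= k), i.e. between collisions j-1 and j
              (interval 0 is (-oo, tc 0], interval k is [tc (k-1), +oo));
   - q i t  : the position of particle i at time t, for all t : R. *)

(* Outgoing velocities of an elastic binary collision. *)
Definition out_left (mi mi1 vi vi1 : R) : R :=
  ((mi - mi1) * vi + 2 * mi1 * vi1) / (mi + mi1).
Definition out_right (mi mi1 vi vi1 : R) : R :=
  ((mi1 - mi) * vi1 + 2 * mi * vi) / (mi + mi1).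

Definition in_interval (k : nat) (tc : nat -> R) (j : nat) (t : R) : Prop :=
  (j = 0%nat \/ tc (j - 1)%nat <= t) /\ (j = k \/ t <= tc j).

Definition elastic_motion (n : nat) (m : nat -> R) (k : nat)
    (tc : nat -> R) (ic : nat -> nat) (v : nat -> nat -> R)
    (q : nat -> R -> R) : Prop :=
  (* collisions are listed in time order; simultaneous collisions (at the
     same instant) concern disjoint pairs, listed left to right, so that the
     k listed collisions are k distinct collision events *)
  (forall j, (S j < k)%nat ->
     tc j < tc (S j) \/ (tc j = tc (S j) /\ (ic j + 1 < ic (S j))%nat)) /\
  (forall j i t s, (j <= k)%nat -> (i < n)%nat ->
     in_interval k tc j t -> in_interval k tc j s ->
     q i t - q i s = v j i * (t - s)) /\
  (forall i t, (S i < n)%nat -> q i t <= q (S i) t) /\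
  (forall i t, (S i < n)%nat -> q i t = q (S i) t ->
     exists j, (j < k)%nat /\ ic j = i /\ tc j = t) /\
  (forall j, (j < k)%nat ->
     (S (ic j) < n)%nat /\
     q (ic j) (tc j) = q (S (ic j)) (tc j) /\
     (ic j = 0%nat \/ q (ic j - 1)%nat (tc j) < q (ic j) (tc j)) /\
     ((S (S (ic j)) >= n)%nat \/ q (S (ic j)) (tc j) < q (S (S (ic j))) (tc j))) /\
  (forall j, (j < k)%nat ->
     let a := ic j in
     v (S j) a = out_left (m a) (m (S a)) (v j a) (v j (S a)) /\
     v (S j) (S a) = out_right (m a) (m (S a)) (v j a) (v j (S a)) /\
     (forall i, (i < n)%nat -> i <> a -> i <> S a -> v (S j) i = v j i)).

From Stdlib Require Import Reals Lra Lia List Classical.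
Open Scope R_scope.

(* With k < n - 1 collisions, some gap i (between particles i and i + 1) is
   never crossed by a collision, so the momenta of the left block
   {0, ..., i} and of the right block {i + 1, ..., n - 1} are conserved
   separately.  Before the first collision the velocities are nonincreasing
   in the particle index (otherwise two particles would have met in the
   remote past), and after the last one they are nondecreasing.  Comparing
   each block's momentum with its total mass times its extreme velocity gives
     v0(i) <= vk(i) <= vk(i+1) <= v0(i+1) <= v0(i),
   so all these are equal, and the equality case of the weighted-average
   inequality makes every initial velocity equal to v0(i).  Finally, with
   uniform initial velocities the two particles of the first collision
   already coincided one time unit earlier, which would be an earlier
   collision: hence there is none. *)

Fixpoint sumr (lo len : nat) (f : nat -> R) : R :=
  match len with O => 0 | S l => f lo + sumr (S lo) l f end.

Lemma sumr_ext : forall len lo f g,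
  (forall l, (lo <= l < lo + len)%nat -> f l = g l) ->
  sumr lo len f = sumr lo len g.
Proof.
  induction len; intros lo f g H; simpl; auto.
  rewrite (H lo) by lia. rewrite (IHlen (S lo) f g); auto.
  intros; apply H; lia.
Qed.

Lemma sumr_le : forall len lo f g,
  (forall l, (lo <= l < lo + len)%nat -> f l <= g l) ->
  sumr lo len f <= sumr lo len g.
Proof.
  induction len; intros lo f g H; simpl; [lra|].
  assert (f lo <= g lo) by (apply H; lia).
  assert (sumr (S lo) len f <= sumr (S lo) len g)
    by (apply IHlen; intros; apply H; lia).
  lra.
Qed.

Lemma sumr_le_eq : forall len lo f g,
  (forall l, (lo <= l < lo + len)%nat -> f l <= g l) ->
  sumr lo len f = sumr lo len g ->
  forall l, (lo <= l < lo + len)%nat -> f l = g l.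
Proof.
  induction len; intros lo f g H E l Hl; simpl in *; [lia|].
  assert (f lo <= g lo) by (apply H; lia).
  assert (sumr (S lo) len f <= sumr (S lo) len g)
    by (apply sumr_le; intros; apply H; lia).
  destruct (Nat.eq_dec l lo) as [->|]; [lra|].
  apply (IHlen (S lo)); [intros; apply H; lia | lra | lia].
Qed.

Lemma sumr_scal : forall len lo (w : nat -> R) c,
  sumr lo len (fun l => w l * c) = c * sumr lo len w.
Proof. induction len; intros; simpl; [ring|]. rewrite IHlen. ring. Qed.

Lemma sumr_pos : forall len lo (w : nat -> R), (0 < len)%nat ->
  (forall l, (lo <= l < lo + len)%nat -> 0 < w l) -> 0 < sumr lo len w.
Proof.
  induction len; intros lo w Hl H; simpl; [lia|].
  assert (0 < w lo) by (apply H; lia).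
  destruct len; simpl; [lra|].
  assert (0 < sumr (S lo) (S len) w) by (apply IHlen; [lia | intros; apply H; lia]).
  simpl in *; lra.
Qed.

Lemma sumr_pair_invariant : forall a len lo f g,
  (forall l, (lo <= l < lo + len)%nat -> l <> a -> l <> S a -> f l = g l) ->
  f a + f (S a) = g a + g (S a) ->
  ((S a < lo)%nat \/ (lo + len <= a)%nat \/ (lo <= a /\ S a < lo + len)%nat) ->
  sumr lo len f = sumr lo len g.
Proof.
  intros a; induction len; intros lo f g H E C; simpl; auto.
  destruct (Nat.eq_dec lo a) as [->|].
  - destruct len; [lia|]. simpl.
    rewrite (sumr_ext len (S (S a)) f g); [lra|].
    intros; apply H; lia.
  - rewrite (H lo) by lia. rewrite (IHlen (S lo) f g); auto; [|lia].
    intros; apply H; lia.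
Qed.

Lemma weighted_sum_le : forall len lo (w x y : nat -> R),
  (forall l, (lo <= l < lo + len)%nat -> 0 <= w l /\ x l <= y l) ->
  sumr lo len (fun l => w l * x l) <= sumr lo len (fun l => w l * y l).
Proof.
  intros len lo w x y H. apply sumr_le. intros l Hl.
  destruct (H l Hl). apply Rmult_le_compat_l; assumption.
Qed.

Lemma elastic_momentum (mi mi1 vi vi1 : R) : 0 < mi -> 0 < mi1 ->
  mi * out_left mi mi1 vi vi1 + mi1 * out_right mi mi1 vi vi1 =
  mi * vi + mi1 * vi1.
Proof. intros. unfold out_left, out_right. field. lra. Qed.

Lemma ordered_forever (x y a b : R) :
  (forall s, 0 <= s -> x + a * s <= y + b * s) -> a <= b.
Proof.
  intros H. destruct (Rle_or_lt a b) as [|Hab]; [assumption|].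
  pose proof (H 0 (Rle_refl 0)) as H0.
  set (s := (y - x + 1) / (a - b)).
  assert (Hs : (a - b) * s = y - x + 1) by (unfold s; field; lra).
  assert (0 <= s) by (unfold s; apply Rlt_le, Rdiv_lt_0_compat; lra).
  pose proof (H s ltac:(assumption)). nra.
Qed.

Lemma nonincreasing_from_succ (N : nat) (f : nat -> R) :
  (forall j, (S j < N)%nat -> f (S j) <= f j) ->
  forall j l, (j <= l < N)%nat -> f l <= f j.
Proof.
  intros H j l [Hjl HlN]. induction Hjl; [lra|].
  pose proof (H m HlN). pose proof (IHHjl ltac:(lia)). lra.
Qed.

Lemma missed_value (f : nat -> nat) (k N : nat) : (k < N)%nat ->
  exists i, (i < N)%nat /\ forall j, (j < k)%nat -> f j <> i.
Proof.
  intros HkN. apply NNPP; intros Hnone.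
  assert (Hcover : incl (seq 0 N) (map f (seq 0 k))).
  { intros x Hx. apply in_seq in Hx. apply in_map_iff.
    apply NNPP; intros Hy. apply Hnone. exists x. split; [lia|].
    intros j Hj Hjx. apply Hy. exists j. split; [assumption|]. apply in_seq; lia. }
  pose proof (NoDup_incl_length (seq_NoDup N 0) Hcover) as Hlen.
  rewrite length_map, !length_seq in Hlen. lia.
Qed.

Section ElasticMotion.

Variables (n : nat) (m : nat -> R) (k : nat) (tc : nat -> R) (ic : nat -> nat)
  (v : nat -> nat -> R) (q : nat -> R -> R).
Hypothesis Hm : forall i, (i < n)%nat -> 0 < m i.
Hypothesis Hmotion : elastic_motion n m k tc ic v q.

Lemma first_collision_earliest : forall j, (j < k)%nat -> tc 0%nat <= tc j.
Proof.
  pose proof Hmotion as (Hord & _).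
  induction j; intros Hj; [lra|].
  pose proof (IHj ltac:(lia)). destruct (Hord j Hj) as [|[E _]]; lra.
Qed.

Lemma initial_flight : forall i t s, (i < n)%nat -> t <= tc 0%nat -> s <= tc 0%nat ->
  q i t - q i s = v 0%nat i * (t - s).
Proof.
  pose proof Hmotion as (_ & Hfree & _).
  intros i t s Hi Ht Hs. apply Hfree; [lia | assumption | split; auto | split; auto].
Qed.

Lemma final_flight : forall i t s, (i < n)%nat ->
  tc (k - 1)%nat <= t -> tc (k - 1)%nat <= s ->
  q i t - q i s = v k i * (t - s).
Proof.
  pose proof Hmotion as (_ & Hfree & _).
  intros i t s Hi Ht Hs. apply Hfree; [lia | assumption | split; auto | split; auto].
Qed.

(* Particles never crossed in the past, so initially faster particles are
   on the left. *)
Lemma initial_velocities_nonincreasing : forall j l, (j <= l < n)%nat ->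
  v 0%nat l <= v 0%nat j.
Proof.
  pose proof Hmotion as (_ & _ & Hle & _).
  apply nonincreasing_from_succ. intros j Hj. set (t0 := tc 0%nat).
  assert (H : - v 0%nat j <= - v 0%nat (S j)); [|lra].
  apply (ordered_forever (q j t0) (q (S j) t0)). intros s Hs.
  pose proof (initial_flight j (t0 - s) t0 ltac:(lia) ltac:(unfold t0; lra) ltac:(unfold t0; lra)).
  pose proof (initial_flight (S j) (t0 - s) t0 Hj ltac:(unfold t0; lra) ltac:(unfold t0; lra)).
  pose proof (Hle j (t0 - s) Hj). nra.
Qed.

(* Particles never cross in the future, so finally faster particles are on
   the right. *)
Lemma final_velocities_nondecreasing : forall j l, (j <= l < n)%nat ->
  v k j <= v k l.
Proof.
  pose proof Hmotion as (_ & _ & Hle & _).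
  intros j l Hjl.
  enough (H : - v k l <= - v k j) by lra.
  revert j l Hjl. apply (nonincreasing_from_succ n (fun l => - v k l)).
  intros j Hj. set (t0 := tc (k - 1)%nat).
  assert (H : v k j <= v k (S j)); [|lra].
  apply (ordered_forever (q j t0) (q (S j) t0)). intros s Hs.
  pose proof (final_flight j (t0 + s) t0 ltac:(lia) ltac:(unfold t0; lra) ltac:(unfold t0; lra)).
  pose proof (final_flight (S j) (t0 + s) t0 Hj ltac:(unfold t0; lra) ltac:(unfold t0; lra)).
  pose proof (Hle j (t0 + s) Hj). nra.
Qed.

Definition momentum (lo len j : nat) : R := sumr lo len (fun l => m l * v j l).

Lemma momentum_conserved (lo len : nat) :
  (lo + len <= n)%nat ->
  (forall j, (j < k)%nat ->
     (S (ic j) < lo)%nat \/ (lo + len <= ic j)%nat \/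
     (lo <= ic j /\ S (ic j) < lo + len)%nat) ->
  forall j, (j <= k)%nat -> momentum lo len j = momentum lo len 0%nat.
Proof.
  pose proof Hmotion as (_ & _ & _ & _ & Hcol & Hlaw).
  intros Hblock Hnostraddle. induction j as [|j IH]; intros Hj; [reflexivity|].
  rewrite <- (IH ltac:(lia)).
  destruct (Hlaw j ltac:(lia)) as (Hleft & Hright & Hothers).
  destruct (Hcol j ltac:(lia)) as (Hpair & _).
  unfold momentum. apply (sumr_pair_invariant (ic j)).
  - intros l Hl Hl1 Hl2. rewrite Hothers; auto. lia.
  - rewrite Hleft, Hright. apply elastic_momentum; apply Hm; lia.
  - exact (Hnostraddle j ltac:(lia)).
Qed.

(* If the initial velocities are all equal, no collision ever happens: the
   particles of the first collision would already have coincided earlier. *)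
Lemma uniform_motion_collision_free (c : R) :
  (forall l, (l < n)%nat -> v 0%nat l = c) -> k = 0%nat.
Proof.
  pose proof Hmotion as (_ & _ & _ & Htie & Hcol & _).
  intros Huniform. destruct (Nat.eq_dec k 0) as [|Hk]; [assumption|]. exfalso.
  destruct (Hcol 0%nat ltac:(lia)) as (Hpair & Hmeet & _).
  set (a := ic 0%nat) in *. set (t0 := tc 0%nat) in *.
  pose proof (initial_flight a (t0 - 1) t0 ltac:(lia) ltac:(unfold t0; lra) ltac:(unfold t0; lra)).
  pose proof (initial_flight (S a) (t0 - 1) t0 Hpair ltac:(unfold t0; lra) ltac:(unfold t0; lra)).
  rewrite Huniform in * by lia.
  destruct (Htie a (t0 - 1) Hpair ltac:(lra)) as (j & Hj & _ & Htj).
  pose proof (first_collision_earliest j Hj). unfold t0 in *. lra.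
Qed.

Section UncrossedGap.

Variable i : nat.
Hypothesis Hi : (i < n - 1)%nat.
Hypothesis Hgap : forall j, (j < k)%nat -> ic j <> i.

Let ML := sumr 0 (S i) m.
Let MR := sumr (S i) (n - S i) m.

Lemma left_block_conserved : momentum 0 (S i) k = momentum 0 (S i) 0.
Proof.
  apply momentum_conserved; [lia | | lia].
  intros j Hj. pose proof (Hgap j Hj). lia.
Qed.

Lemma right_block_conserved : momentum (S i) (n - S i) k = momentum (S i) (n - S i) 0.
Proof.
  pose proof Hmotion as (_ & _ & _ & _ & Hcol & _).
  apply momentum_conserved; [lia | | lia].
  intros j Hj. pose proof (Hgap j Hj). destruct (Hcol j Hj). lia.
Qed.

Lemma left_block_bounds :
  v 0%nat i * ML <= momentum 0 (S i) 0 /\ momentum 0 (S i) k <= v k i * ML.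
Proof.
  unfold ML, momentum. rewrite <- !sumr_scal. split; apply weighted_sum_le;
    intros l Hl; (split; [apply Rlt_le, Hm; lia|]).
  - apply initial_velocities_nonincreasing; lia.
  - apply final_velocities_nondecreasing; lia.
Qed.

Lemma right_block_bounds :
  momentum (S i) (n - S i) 0 <= v 0%nat (S i) * MR /\
  v k (S i) * MR <= momentum (S i) (n - S i) k.
Proof.
  unfold MR, momentum. rewrite <- !sumr_scal. split; apply weighted_sum_le;
    intros l Hl; (split; [apply Rlt_le, Hm; lia|]).
  - apply initial_velocities_nonincreasing; lia.
  - apply final_velocities_nondecreasing; lia.
Qed.

(* The chain v0(i) <= vk(i) <= vk(i+1) <= v0(i+1) <= v0(i) closes up. *)
Lemma gap_velocities_equal :
  v k i = v 0%nat i /\ v 0%nat (S i) = v 0%nat i.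
Proof.
  assert (HML : 0 < ML) by (apply sumr_pos; [lia | intros; apply Hm; lia]).
  assert (HMR : 0 < MR) by (apply sumr_pos; [lia | intros; apply Hm; lia]).
  pose proof left_block_bounds. pose proof right_block_bounds.
  pose proof left_block_conserved. pose proof right_block_conserved.
  pose proof (initial_velocities_nonincreasing i (S i) ltac:(lia)).
  pose proof (final_velocities_nondecreasing i (S i) ltac:(lia)).
  assert (v 0%nat i <= v k i) by nra.
  assert (v k (S i) <= v 0%nat (S i)) by nra.
  lra.
Qed.

(* Equality in the block bounds forces every initial velocity to be v0(i). *)
Lemma initial_velocities_uniform : forall l, (l < n)%nat -> v 0%nat l = v 0%nat i.
Proof.
  assert (HML : 0 < ML) by (apply sumr_pos; [lia | intros; apply Hm; lia]).
  assert (HMR : 0 < MR) by (apply sumr_pos; [lia | intros; apply Hm; lia]).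
  destruct gap_velocities_equal as [Hki HSi].
  pose proof left_block_bounds. pose proof right_block_bounds.
  pose proof left_block_conserved. pose proof right_block_conserved.
  pose proof (final_velocities_nondecreasing i (S i) ltac:(lia)).
  intros l Hl. apply (Rmult_eq_reg_l (m l)); [|apply Rgt_not_eq, Hm; lia].
  destruct (Compare_dec.le_lt_dec l i).
  - symmetry. apply (sumr_le_eq (S i) 0 (fun l => m l * v 0%nat i)
                                        (fun l => m l * v 0%nat l)); [| |lia].
    + intros l' Hl'. apply Rmult_le_compat_l; [apply Rlt_le, Hm; lia|].
      apply initial_velocities_nonincreasing; lia.
    + rewrite sumr_scal. fold (momentum 0 (S i) 0). fold ML. nra.
  - apply (sumr_le_eq (n - S i) (S i) (fun l => m l * v 0%nat l)
                                      (fun l => m l * v 0%nat i)); [| |lia].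
    + intros l' Hl'. apply Rmult_le_compat_l; [apply Rlt_le, Hm; lia|].
      rewrite <- HSi. apply initial_velocities_nonincreasing; lia.
    + rewrite sumr_scal. fold (momentum (S i) (n - S i) 0). fold MR. nra.
Qed.

End UncrossedGap.

End ElasticMotion.

Theorem mainTheorem1 (n : nat) (m : nat -> R)
    (Hm : forall i, (i < n)%nat -> 0 < m i)
    (k : nat) (tc : nat -> R) (ic : nat -> nat) (v : nat -> nat -> R)
    (q : nat -> R -> R)
    (Hmotion : elastic_motion n m k tc ic v q)
    (Hfew : (k < n - 1)%nat) :
  (forall i j, (i < n)%nat -> (j < n)%nat -> v 0%nat i = v 0%nat j) /\ k = 0%nat.
Proof.
  destruct (missed_value ic k (n - 1) Hfew) as (i & Hi & Hgap).
  pose proof (initial_velocities_uniform n m k tc ic v q Hm Hmotion i Hi Hgap)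
    as Huniform.
  split.
  - intros a b Ha Hb. rewrite (Huniform a Ha), (Huniform b Hb). reflexivity.
  - exact (uniform_motion_collision_free n m k tc ic v q Hmotion _ Huniform).
Qed.
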